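(* For every generalized Stirling permutation $u$ of degree $n$ and every planar tree $t$ of degree $n$: $\pi(u)\le_{PT}t$ if and only if $u\le_{Pw}\iota(t)$. That is, $\pi$ and $\iota$ form a Galois connection between the planar weak order on generalized Stirling permutations and the planar Tamari order on planar trees.
   Context: A planar tree has linearly ordered children at each node, each node being a leaf or having $\ge2$ children (internal node); degree = number of leaves minus one. A generalized Stirling permutation (GSP) is a planar tree together with a bijection $\kappa$ from its internal nodes to $\{1,\dots,N\}$ ($N$ = number of internal nodes) increasing from each internal node to its internal children; $\pi(u)$ is its underlying planar tree. Its word $\mathbf w(u)$: a leaf has empty word; a node $x$ with children $c_1,\dots,c_k$ has word $\mathbf w(c_1)\kappa(x)\mathbf w(c_2)\cdots\kappa(x)\mathbf w(c_k)$. For each planar tree $t$ there is exactly one GSP with underlying tree $t$ whose word is $213$-avoiding (no $i<j<k$ with $w_k>w_i>w_j$); it is denoted $\iota(t)$. Planar weak order: for packed words, $w^{-1}(a)=\{p:w_p=a\}$, $\mathrm{iInv}(w)=\{(a,b):a<b,\ \min w^{-1}(a)>\max w^{-1}(b)\}$, $T_a(w)$ = $w$ with letters $a,a+1$ swapped; the order is the reflexive–transitive closure of: $u$ is covered by $w$ iff $u=T_a(w)$ and $|\mathrm{iInv}(w)|=|\mathrm{iInv}(u)|+1$. On GSPs, $u\le_{Pw}v$ iff $\mathbf w(u)\le\mathbf w(v)$. Planar Tamari order: if an internal node $x$ has children $c_1,\dots,c_{a-1},y$ ($a\ge2$) with $y$ internal having children $d_1,\dots,d_{b+1}$ ($b\ge1$),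 the left rotation at $x$ replaces the subtree at $x$ by a node with children $z,d_2,\dots,d_{b+1}$, where $z$ is a new node with children $c_1,\dots,c_{a-1},d_1$. $\le_{PT}$ is the reflexive–transitive closure of ''$t$ is a left rotation of $s$''. *)

From mathcomp Require Import all_boot.
From Stdlib Require Import Relations.Relation_Operators.
Set Implicit Arguments. Unset Strict Implicit. Unset Printing Implicit Defensive.

Inductive ptree := PLeaf | PNode of seq ptree.

Fixpoint wf_pt (t : ptree) : bool :=
  match t with
  | PLeaf => true
  | PNode cs => (1 < size cs) && all wf_pt cs
  end.

Fixpoint nleaves (t : ptree) : nat :=
  match t with
  | PLeaf => 1
  | PNode cs => sumn (map nleaves cs)
  end.

Definition pt_degree (t : ptree) : nat := (nleaves t).-1.

Inductive ltree := LLeaf | LNode of nat & seq ltree.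

Fixpoint pi_tree (u : ltree) : ptree :=
  match u with
  | LLeaf => PLeaf
  | LNode _ cs => PNode (map pi_tree cs)
  end.

Fixpoint labels (u : ltree) : seq nat :=
  match u with
  | LLeaf => [::]
  | LNode k cs => k :: flatten (map labels cs)
  end.

Definition lab_gt (k : nat) (c : ltree) : bool :=
  match c with LLeaf => true | LNode k' _ => k < k' end.

Fixpoint increasing (u : ltree) : bool :=
  match u with
  | LLeaf => true
  | LNode k cs => all (lab_gt k) cs && all increasing cs
  end.

(* u is a GSP: planar tree, kappa a bijection internal nodes -> {1..N}, increasing *)
Definition is_gsp (u : ltree) : bool :=
  [&& wf_pt (pi_tree u),
      perm_eq (labels u) (iota 1 (size (labels u))) &
      increasing u].

Definition gsp_degree (u : ltree) : nat := pt_degree (pi_tree u).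

Fixpoint word (u : ltree) : seq nat :=
  match u with
  | LLeaf => [::]
  | LNode k cs =>
      match map word cs with
      | [::] => [::]
      | w1 :: ws => w1 ++ flatten (map (cons k) ws)
      end
  end.

Definition avoids213 (w : seq nat) : Prop :=
  forall i j k, i < j -> j < k -> k < size w ->
    ~ (nth 0 w j < nth 0 w i /\ nth 0 w i < nth 0 w k).

Definition is_iota (t : ptree) (v : ltree) : Prop :=
  is_gsp v /\ pi_tree v = t /\ avoids213 (word v).

Definition maxw (w : seq nat) : nat := foldr maxn 0 w.

Definition packed (w : seq nat) : bool :=
  all (fun a => a \in w) (iota 1 (maxw w)) && all (fun a => 0 < a) w.

(* max w^{-1}(b) (for b occurring in w) *)
Definition lastpos (b : nat) (w : seq nat) : nat := (size w).-1 - index b (rev w).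
(* min w^{-1}(a) is index a w *)

Definition iinv_card (w : seq nat) : nat :=
  count (fun p : nat * nat => (p.1 < p.2) && (lastpos p.2 w < index p.1 w))
        [seq (a, b) | a <- iota 1 (maxw w), b <- iota 1 (maxw w)].

Definition Tswap (a : nat) (w : seq nat) : seq nat :=
  map (fun x => if x == a then a.+1 else if x == a.+1 then a else x) w.

Definition pw_cover (u w : seq nat) : Prop :=
  [/\ packed u, packed w,
      exists a, u = Tswap a w &
      iinv_card w = (iinv_card u).+1].

Definition pw_le : seq nat -> seq nat -> Prop := clos_refl_trans (seq nat) pw_cover.

Definition gsp_le (u v : ltree) : Prop := pw_le (word u) (word v).

Inductive lrot : ptree -> ptree -> Prop :=
  | lrot_root (cs : seq ptree) (d1 : ptree) (ds : seq ptree) :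
      cs <> [::] -> ds <> [::] ->
      lrot (PNode (rcons cs (PNode (d1 :: ds))))
           (PNode (PNode (rcons cs d1) :: ds))
  | lrot_in (cs1 cs2 : seq ptree) (c c' : ptree) :
      lrot c c' -> lrot (PNode (cs1 ++ c :: cs2)) (PNode (cs1 ++ c' :: cs2)).

Definition pt_le : ptree -> ptree -> Prop := clos_refl_trans ptree lrot.

(* The proof compares both orders with two orders on words.
   1. [inv_below x y]: x and y have the same length and ties, and every inversion
      of x is an inversion of y.  On packed words this is the planar weak order
      ([pw_le_iff]): a cover exchanges two consecutive letters whose occurrences
      are separated, which only removes inversions; conversely, while x <> y, a
      "bad pair" of positions with consecutive y-letters gives a cover of y
      that stays above x.
   2. [runs_le x y]: same length and ties, and every run of y (the letters after
      a position up to the first smaller one) is at most the run of x.  When y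
      avoids 213 this is [inv_below] again ([inv_below_runs]).
   3. On words of labelled trees (increasing, distinct labels) the run order is
      the planar Tamari order on shapes.  It ignores the labels
      ([same_shape_runs]) and a root rotation exchanges two letters, so left
      rotations go down ([tamari_runs]); conversely, comparable words split at
      the root of the upper tree, which locates a right-spine node of the lower
      one, and rotations along that spine conclude ([runs_tamari]).
   The main theorem chains 1, 2 and 3 for the words of u and iota(t). *)

From mathcomp Require Import all_boot zify.
From Stdlib Require Import Relations.Relation_Operators.
From Stdlib Require List.

Unset Printing Implicit Defensive.

Definition swapl (a x : nat) : nat :=
  if x == a then a.+1 else if x == a.+1 then a else x.

Lemma swaplK a : involutive (swapl a).
Proof.
move=> x; rewrite /swapl; case: (eqVneq x a) => [->|?];
  last case: (eqVneq x a.+1) => [->|?]; repeat case: eqVneq => ?; lia.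
Qed.

Lemma swapl_inj a : injective (swapl a).
Proof. exact: inv_inj (swaplK a). Qed.

Lemma swapl_le a x y : x <= y -> ~ (x = a /\ y = a.+1) -> swapl a x <= swapl a y.
Proof. by rewrite /swapl; repeat case: eqVneq => ?; lia. Qed.

Lemma swapl_lt a x y : (x, y) != (a.+1, a) -> (x, y) != (a, a.+1) ->
  (swapl a x < swapl a y) = (x < y).
Proof. by rewrite /swapl !xpair_eqE; repeat case: eqVneq => ?; lia. Qed.

Lemma swapl_le_inv a x y : swapl a x <= swapl a y -> y < x -> x = a.+1 /\ y = a.
Proof. by rewrite /swapl; repeat case: eqVneq => ?; lia. Qed.

Lemma swapl_range a M x : 0 < a -> a < M -> (0 < swapl a x <= M) = (0 < x <= M).
Proof. by rewrite /swapl; repeat case: eqVneq => ?; lia. Qed.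

Lemma TswapE a w : Tswap a w = map (swapl a) w.
Proof. by []. Qed.

Lemma size_Tswap a w : size (Tswap a w) = size w.
Proof. exact: size_map. Qed.

Lemma nth_Tswap a w i : i < size w -> nth 0 (Tswap a w) i = swapl a (nth 0 w i).
Proof. by move=> hi; rewrite TswapE (nth_map 0). Qed.

Lemma mem_Tswap a w x : (x \in Tswap a w) = (swapl a x \in w).
Proof. by rewrite TswapE -{1}(swaplK a x) (mem_map (@swapl_inj a)). Qed.

Lemma Tswap_eqmem a w : a \in w -> a.+1 \in w -> Tswap a w =i w.
Proof.
move=> ha hb x; rewrite mem_Tswap /swapl.
case: (eqVneq x a) => [->|_]; first by rewrite ha hb.
by case: (eqVneq x a.+1) => [->|_]; rewrite ?ha ?hb.
Qed.

Lemma maxw_ub w x : x \in w -> x <= maxw w.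
Proof.
elim: w => //= y w IH; rewrite in_cons => /orP[/eqP->|/IH h]; first exact: leq_maxl.
exact: leq_trans h (leq_maxr _ _).
Qed.

Lemma maxw_in w : w != [::] -> maxw w \in w.
Proof.
elim: w => // y w IH _; rewrite [maxw _]/= -/(maxw w) in_cons.
case: w IH => [|z w] IH; first by rewrite /= maxn0 eqxx.
by case: (leqP y (maxw (z :: w))) => h; [rewrite IH ?orbT | rewrite eqxx].
Qed.

Lemma maxw_eqmem w1 w2 : w1 =i w2 -> maxw w1 = maxw w2.
Proof.
have le12 s1 s2 : {subset s1 <= s2} -> maxw s1 <= maxw s2.
  by case: s1 => [|y s1] // h; apply/maxw_ub/h/maxw_in.
by move=> e; apply/eqP; rewrite eqn_leq !le12 // => x; rewrite e.
Qed.

Lemma packed_pos w x : packed w -> x \in w -> 0 < x.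
Proof. by case/andP=> _ /allP h /h. Qed.

Lemma packed_mem w k : packed w -> 0 < k <= maxw w -> k \in w.
Proof. by case/andP=> /allP h _ hk; apply: h; rewrite mem_iota; lia. Qed.

Lemma packed_Tswap a w : packed w -> a \in w -> a.+1 \in w -> packed (Tswap a w).
Proof.
move=> pw ha hb; have e := Tswap_eqmem a w ha hb.
rewrite /packed (maxw_eqmem _ _ e); apply/andP; split; apply/allP => x.
  by rewrite e => hx; case/andP: pw => /allP /(_ _ hx).
by rewrite e; apply: packed_pos.
Qed.

Lemma index_le (w : seq nat) i : i < size w -> index (nth 0 w i) w <= i.
Proof.
move=> hi; rewrite leqNgt; apply/negP => h.
by have := before_find 0 h; rewrite /= eqxx.
Qed.

Lemma lastpos_ge (w : seq nat) j : j < size w -> j <= lastpos (nth 0 w j) w.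
Proof.
move=> hj; rewrite /lastpos.
have hr : size w - j.+1 < size (rev w) by rewrite size_rev; lia.
have e : nth 0 (rev w) (size w - j.+1) = nth 0 w j.
  rewrite nth_rev; last by rewrite size_rev in hr.
  by congr nth; lia.
by have := index_le (rev w) _ hr; rewrite e; lia.
Qed.

Lemma lastpos_in (w : seq nat) b :
  b \in w -> lastpos b w < size w /\ nth 0 w (lastpos b w) = b.
Proof.
move=> hb; rewrite /lastpos.
have hr : b \in rev w by rewrite mem_rev.
have hi : index b (rev w) < size w by rewrite -size_rev index_mem.
split; first lia.
have := nth_index 0 hr; rewrite nth_rev ?size_rev //.
by have -> : size w - (index b (rev w)).+1 = (size w).-1 - index b (rev w) by lia.
Qed.

Lemma index_in (w : seq nat) b : b \in w -> index b w < size w /\ nth 0 w (index b w) = b.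
Proof. by move=> hb; rewrite index_mem nth_index. Qed.

Lemma count_diff (T : eqType) (L : seq T) (P Q : pred T) s :
  uniq L -> s \in L -> (forall x, x \in L -> x != s -> P x = Q x) ->
  count P L + Q s = count Q L + P s.
Proof.
move=> uL sL H; have pr := perm_to_rem sL.
rewrite (permP pr P) (permP pr Q) /=.
have -> : count P (rem s L) = count Q (rem s L).
  by apply: eq_in_count => x; rewrite (mem_rem_uniq _ uL) => /andP[h1 h2]; exact: H.
lia.
Qed.

Definition letter_pairs (M : nat) : seq (nat * nat) :=
  [seq (x, y) | x <- iota 1 M, y <- iota 1 M].

Definition iinv_pair (w : seq nat) (p : nat * nat) : bool :=
  (p.1 < p.2) && (lastpos p.2 w < index p.1 w).

Lemma iinv_cardE w : iinv_card w = count (iinv_pair w) (letter_pairs (maxw w)).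
Proof. by []. Qed.

Lemma mem_letter_pairs M p : (p \in letter_pairs M) = (0 < p.1 <= M) && (0 < p.2 <= M).
Proof.
apply/allpairsP/idP => [[[x y] [h1 h2 ->]]|].
  by move: h1 h2; rewrite !mem_iota /=; lia.
case: p => x y /= h; exists (x, y); rewrite !mem_iota /=; split => //; lia.
Qed.

Lemma uniq_letter_pairs M : uniq (letter_pairs M).
Proof.
by apply: allpairs_uniq; rewrite ?iota_uniq // => -[? ?] [? ?] _ _ [-> ->].
Qed.

(* Exchanging letters permutes the letter pairs, so the interleaving pairs of
   [Tswap a w] are those of [w] read through [swapl a]. *)
Lemma iinv_card_Tswap a w : 0 < a -> a < maxw w -> maxw (Tswap a w) = maxw w ->
  iinv_card (Tswap a w) =
  count (fun p : nat * nat => (swapl a p.1 < swapl a p.2) && (lastpos p.2 w < index p.1 w))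
        (letter_pairs (maxw w)).
Proof.
move=> a0 aM eM; rewrite iinv_cardE eM.
set L := letter_pairs _; set f := fun p : nat * nat => (swapl a p.1, swapl a p.2).
have f_inj : injective f by move=> [x1 y1] [x2 y2] [/swapl_inj -> /swapl_inj ->].
have pe : perm_eq (map f L) L.
  apply: uniq_perm; rewrite ?map_inj_uniq ?uniq_letter_pairs // => -[x y].
  apply/mapP/idP => [[[x' y'] hp [-> ->]]|hp].
    by move: hp; rewrite !mem_letter_pairs /= !swapl_range.
  exists (swapl a x, swapl a y); last by rewrite /f /= !swaplK.
  by move: hp; rewrite !mem_letter_pairs /= !swapl_range.
rewrite -(permP pe) count_map; apply: eq_count => -[x y].
rewrite /preim /iinv_pair /= /lastpos TswapE size_map -map_rev !index_map //.
all: exact: swapl_inj.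
Qed.

Lemma iinv_swap a w : 0 < a -> a < maxw w -> maxw (Tswap a w) = maxw w ->
  iinv_card w + (lastpos a w < index a.+1 w) =
  iinv_card (Tswap a w) + (lastpos a.+1 w < index a w).
Proof.
move=> a0 aM eM; rewrite (iinv_card_Tswap a w a0 aM eM) iinv_cardE.
set L := letter_pairs _.
set R := fun p : nat * nat => (swapl a p.1 < swapl a p.2) && (lastpos p.2 w < index p.1 w).
set s1 := (a.+1, a); set s2 := (a, a.+1).
have s1L : s1 \in L by rewrite mem_letter_pairs /=; lia.
have s2L : s2 \in L by rewrite mem_letter_pairs /=; lia.
have ne : s2 != s1 by rewrite xpair_eqE; apply/nandP; left; lia.
set P1 := fun p => if p == s1 then R p else iinv_pair w p.
have e1 := count_diff _ L (iinv_pair w) P1 s1 (uniq_letter_pairs _) s1L.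
have e2 := count_diff _ L P1 R s2 (uniq_letter_pairs _) s2L.
rewrite /P1 eqxx (negbTE ne) in e1 e2.
have R1 : R s1 = (lastpos a w < index a.+1 w).
  by rewrite /R /= /swapl eqxx (gtn_eqF (ltnSn a)) eqxx ltnSn.
have R2 : R s2 = false by rewrite /R /= /swapl eqxx (gtn_eqF (ltnSn a)) eqxx ltnNge leqnSn.
have I1 : iinv_pair w s1 = false by rewrite /iinv_pair /= ltnNge leqnSn.
have I2 : iinv_pair w s2 = (lastpos a.+1 w < index a w) by rewrite /iinv_pair /= ltnSn.
rewrite R1 R2 I1 I2 !addn0 in e1 e2.
rewrite e1 ?e2 // => x _ hx.
  by case: ifP => // /negbT hx1; rewrite /iinv_pair /R swapl_lt.
by rewrite (negbTE hx).
Qed.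

Definition same_ties (x y : seq nat) : Prop :=
  forall i j, i < size x -> j < size x ->
    (nth 0 x i == nth 0 x j) = (nth 0 y i == nth 0 y j).

(* On packed
   words this is exactly the planar weak order (lemma [pw_le_iff]). *)
Definition inv_below (x y : seq nat) : Prop :=
  [/\ size x = size y, same_ties x y &
      forall i j, i < j -> j < size x -> nth 0 y i <= nth 0 y j -> nth 0 x i <= nth 0 x j].

Lemma inv_below_refl x : inv_below x x.
Proof. by split. Qed.

Lemma inv_below_trans x y z : inv_below x y -> inv_below y z -> inv_below x z.
Proof.
case=> s1 e1 m1 [s2 e2 m2]; split; first by rewrite s1.
  by move=> i j hi hj; rewrite e1 // e2 // -s1.
by move=> i j hij hj h; apply: m1 => //; apply: m2 => //; rewrite -s1.
Qed.

Lemma cover_separated a w : packed w -> packed (Tswap a w) ->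
  iinv_card w = (iinv_card (Tswap a w)).+1 ->
  forall i j, i < j -> j < size w -> nth 0 w i = a -> nth 0 w j = a.+1 -> False.
Proof.
move=> pw pu hc i j hij hj hi hj'.
have ha : a \in w by rewrite -hi; apply/mem_nth/(ltn_trans hij hj).
have hb : a.+1 \in w by rewrite -hj'; apply: mem_nth.
have a0 : 0 < a by apply: packed_pos pw ha.
have aM : a < maxw w by apply: maxw_ub.
have eM : maxw (Tswap a w) = maxw w by apply/maxw_eqmem/Tswap_eqmem.
have := iinv_swap a w a0 aM eM; rewrite hc.
have := lastpos_ge w j hj; have := index_le w i (ltn_trans hij hj); rewrite hi hj'.
case: ltnP => //; lia.
Qed.

Lemma cover_inv_below u w : pw_cover u w -> inv_below u w.
Proof.
case=> pu pw [a eu] hc; subst u; split; first exact: size_Tswap.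
  by move=> i j; rewrite size_Tswap => hi hj; rewrite !nth_Tswap // (inj_eq (@swapl_inj a)).
move=> i j hij; rewrite size_Tswap => hj h; rewrite !nth_Tswap //; last exact: ltn_trans hij hj.
by apply: swapl_le => // -[e1 e2]; apply: (cover_separated a w pw pu hc i j hij hj e1 e2).
Qed.

Lemma pw_le_inv_below x y : pw_le x y -> inv_below x y.
Proof.
elim=> [u w /cover_inv_below //|u|u v w _ h1 _ h2]; first exact: inv_below_refl.
exact: inv_below_trans h1 h2.
Qed.

Lemma packed_eq x y : packed x -> packed y -> size x = size y ->
  (forall i j, i < size x -> j < size x ->
     (nth 0 x i < nth 0 x j) = (nth 0 y i < nth 0 y j)) -> x = y.
Proof.
move=> px py sz H; apply: (eq_from_nth (x0:=0)) => // i hi.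
suff key v k : k < size x -> nth 0 x k = v -> nth 0 y k = v by rewrite (key _ i hi erefl).
elim/ltn_ind: v k => v IH k hk hv.
have v0 : 0 < v by rewrite -hv; apply: packed_pos px _; apply: mem_nth.
have hyk : nth 0 y k \in y by apply: mem_nth; rewrite -sz.
apply/eqP; rewrite eqn_leq; apply/andP; split.
  rewrite leqNgt; apply/negP => lt.
  have vy : v \in y by apply: packed_mem => //; rewrite v0 (leq_trans (ltnW lt)) ?maxw_ub.
  have [jy hjy] := index_in y v vy; set j := index v y in jy hjy.
  have jx : j < size x by rewrite sz.
  have hx : nth 0 x j < nth 0 x k by rewrite (H j k jx hk) hjy.
  by have := IH _ (leq_trans hx (eq_leq hv)) j jx erefl; lia.
have y0 : 0 < nth 0 y k by apply: packed_pos py hyk.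
case: v IH hv v0 => [|[|v]] // IH hv _.
have hm : v.+2 <= maxw x by rewrite -hv; apply/maxw_ub/mem_nth.
have vx : v.+1 \in x by apply: packed_mem => //; lia.
have [jx hjx] := index_in x v.+1 vx; set j := index v.+1 x in jx hjx.
have : nth 0 x j < nth 0 x k by rewrite hjx hv.
by rewrite (H j k jx hk) (IH v.+1 (ltnSn _) j jx hjx).
Qed.

Definition bad_pair (x y : seq nat) (i j : nat) : bool :=
  [&& i < j, j < size x, nth 0 y j < nth 0 y i & nth 0 x i < nth 0 x j].

Section InvBelow.
Variables x y : seq nat.
Hypothesis px : packed x.
Hypothesis py : packed y.
Hypothesis below : inv_below x y.

Let sz : size x = size y. Proof. by case: below. Qed.

Let tie i j : i < size x -> j < size x ->
  (nth 0 x i == nth 0 x j) = (nth 0 y i == nth 0 y j).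
Proof. by case: below => _ + _; apply. Qed.

Let mono {i j} : i < j -> j < size x -> nth 0 y i < nth 0 y j -> nth 0 x i < nth 0 x j.
Proof.
move=> hij hj hy; case: below => _ _ /(_ i j hij hj (ltnW hy)).
by have := tie i j (ltn_trans hij hj) hj; rewrite (ltn_eqF hy) ltn_neqAle => -> ->.
Qed.

(* Without bad pairs, x and y order their letters alike, hence coincide. *)
Lemma inv_below_eq : (forall i j, ~~ bad_pair x y i j) -> x = y.
Proof.
move=> nobad; apply: packed_eq => // i j hi hj.
have eq_case : nth 0 y i = nth 0 y j -> nth 0 x i = nth 0 x j.
  by move=> e; apply/eqP; rewrite tie // e.
have nb k l : k < l -> l < size x -> nth 0 y l < nth 0 y k -> nth 0 x l <= nth 0 x k.
  by move=> hkl hl hy; have := nobad k l; rewrite /bad_pair hkl hl hy /= -leqNgt.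
have ne k l : k < size x -> l < size x -> nth 0 y k != nth 0 y l -> nth 0 x k != nth 0 x l.
  by move=> hk hl; rewrite tie.
case: (ltngtP (nth 0 y i) (nth 0 y j)) => hy; last by rewrite (eq_case hy) ltnn.
- case: (ltngtP i j) => [hij|hji|e]; last by move: hy; rewrite e ltnn.
    by rewrite mono.
  have := ne _ _ hi hj (negbT (ltn_eqF hy)); have := nb j i hji hi hy; lia.
- case: (ltngtP i j) => [hij|hji|e]; last by move: hy; rewrite e ltnn.
    by apply/negbTE; rewrite -leqNgt nb.
  by apply/negbTE; rewrite -leqNgt ltnW ?mono.
Qed.

Let weak {i j} : i < j -> j < size x -> nth 0 y i <= nth 0 y j -> nth 0 x i <= nth 0 x j.
Proof. by case: below => _ _; apply. Qed.

Let tied {i j} : i < size x -> j < size x -> nth 0 y i = nth 0 y j -> nth 0 x i = nth 0 x j.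
Proof. by move=> hi hj e; apply/eqP; rewrite tie // e. Qed.

Let untied {i j} : i < size x -> j < size x -> nth 0 y i != nth 0 y j -> nth 0 x i != nth 0 x j.
Proof. by move=> hi hj; rewrite tie. Qed.

(* Any bad pair yields a bad pair whose y-letters are consecutive: the letter
   just above [y_j] sits at a position that shortens the gap. *)
Lemma bad_pair_adjacent i j : bad_pair x y i j ->
  exists i' j', bad_pair x y i' j' /\ nth 0 y i' = (nth 0 y j').+1.
Proof.
move: {2}(nth 0 y i - nth 0 y j) (erefl (nth 0 y i - nth 0 y j)) => d.
elim/ltn_ind: d i j => d IH i j hd /and4P[hij hj hyji hxij].
have hi : i < size x := ltn_trans hij hj.
have [e|gap] := eqVneq (nth 0 y i) (nth 0 y j).+1.
  by exists i, j; rewrite /bad_pair hij hj hyji hxij.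
set c := (nth 0 y j).+1.
have hyc : c < nth 0 y i by rewrite ltn_neqAle eq_sym gap hyji.
have cy : c \in y.
  by apply: packed_mem => //; rewrite ltn0Sn /= (leq_trans hyji) // maxw_ub // mem_nth // -sz.
have [ky hky] := index_in y c cy; set k := index c y in ky hky; rewrite -sz in ky.
have adj_kj : k < j -> nth 0 x k < nth 0 x j ->
    exists i' j', bad_pair x y i' j' /\ nth 0 y i' = (nth 0 y j').+1.
  by move=> hkj hxk; exists k, j; rewrite /bad_pair hkj hj hxk hky /c ltnSn.
have shrink : i < k -> k < size x -> nth 0 x i < nth 0 x k ->
    exists i' j', bad_pair x y i' j' /\ nth 0 y i' = (nth 0 y j').+1.
  move=> hik hk hxk; apply: (IH (nth 0 y i - c) _ i k); last 2 first.
  - by rewrite hky.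
  - by rewrite /bad_pair hik hk hxk hky hyc.
  - by rewrite -hd /c; lia.
case: (ltngtP k i) => hki; last by move: gap; rewrite -hki hky eqxx.
- apply: adj_kj; first exact: ltn_trans hki hij.
  by apply: ltn_trans hxij; apply: mono => //; rewrite hky.
case: (ltngtP k j) => hkj; last by move: hky; rewrite hkj /c; lia.
- case: (ltnP (nth 0 x i) (nth 0 x k)) => hx; first exact: shrink.
  apply: adj_kj => //; apply: leq_ltn_trans hxij.
  have := untied ky hi; rewrite hky neq_ltn hyc => /(_ isT); lia.
- apply: shrink => //; apply: ltn_trans hxij _.
  by apply: mono => //; rewrite hky.
Qed.

Lemma inv_below_step i j : bad_pair x y i j -> nth 0 y i = (nth 0 y j).+1 ->
  pw_cover (Tswap (nth 0 y j) y) y /\ inv_below x (Tswap (nth 0 y j) y).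
Proof.
case/and4P=> hij hj _ hxij; set a := nth 0 y j => d1.
have hi : i < size x := ltn_trans hij hj.
have ha : a \in y by apply: mem_nth; rewrite -sz.
have hb : a.+1 \in y by rewrite -d1; apply: mem_nth; rewrite -sz.
(* every [a] of y ties with position [j], every [a.+1] with position [i] *)
have no_ab p q : p < q -> q < size x -> nth 0 y p = a -> nth 0 y q = a.+1 -> False.
  move=> hpq hq hp hq'; have hp' : p < size x := ltn_trans hpq hq.
  have := weak hpq hq; rewrite hp hq' (tied hp' hj hp) (tied hq hi (etrans hq' (esym d1))).
  by move/(_ (leqnSn _)); rewrite leqNgt hxij.
have a0 : 0 < a by apply: packed_pos py ha.
have aM : a < maxw y by apply: maxw_ub.
have eM : maxw (Tswap a y) = maxw y by apply/maxw_eqmem/Tswap_eqmem.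
have ide := iinv_swap a y a0 aM eM.
have f1 : (lastpos a y < index a.+1 y) = false.
  apply/negbTE; rewrite -leqNgt.
  have := @lastpos_ge y j; have := @index_le y i; rewrite -sz d1 -/a; lia.
have f2 : (lastpos a.+1 y < index a y) = true.
  have [l1 l2] := lastpos_in y _ hb; have [i1 i2] := index_in y a ha.
  rewrite ltnNge; apply/negP => hle.
  case: (ltngtP (index a y) (lastpos a.+1 y)) hle => // h _.
    by apply: (no_ab _ _ h); rewrite ?sz.
  by move: i2 l2; rewrite h => ->; lia.
rewrite f1 f2 addn0 addn1 in ide.
have pT := packed_Tswap a y py ha hb.
split; first by split => //; exists a.
split; first by rewrite sz size_Tswap.
  by move=> p q hp hq; rewrite !nth_Tswap -?sz // (inj_eq (@swapl_inj a)) tie.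
move=> p q hpq hq; rewrite !nth_Tswap -?sz //; last exact: ltn_trans hpq hq.
case: (leqP (nth 0 y p) (nth 0 y q)) => hle; first by move=> _; apply: weak.
move=> /swapl_le_inv /(_ hle) [e1 e2]; have hp : p < size x := ltn_trans hpq hq.
by rewrite (tied hp hi (etrans e1 (esym d1))) (tied hq hj e2) ltnW.
Qed.

Lemma inv_below_descend :
  x = y \/ exists a, pw_cover (Tswap a y) y /\ inv_below x (Tswap a y).
Proof.
have [/existsP[i /existsP[j bij]]|nobad] :=
  boolP [exists i : 'I_(size x), exists j : 'I_(size x), bad_pair x y i j].
  have [i' [j' [bij' d1]]] := bad_pair_adjacent _ _ bij.
  by right; exists (nth 0 y j'); apply: inv_below_step _ _ bij' d1.
left; apply: inv_below_eq => i j; apply/negP => bij.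
have [hij hj] : i < j /\ j < size x by case/and4P: bij.
move/negP: nobad; apply; apply/existsP; exists (Ordinal (ltn_trans hij hj)).
by apply/existsP; exists (Ordinal hj).
Qed.

End InvBelow.

(* The planar weak order on packed words is the inversion order [inv_below]:
   descend from y along covers, which strictly decrease [iinv_card]. *)
Lemma pw_le_iff x y : packed x -> packed y -> (pw_le x y <-> inv_below x y).
Proof.
move=> px py; split; first exact: pw_le_inv_below.
move: {2}(iinv_card y) (leqnn (iinv_card y)) => N.
elim: N y py => [|N IH] y py hN hb;
  have [<-|[a [cov hb']]] := inv_below_descend x y px py hb; try exact: rt_refl.
  by case: cov => _ _ _; lia.
have [pT _ _ hc] := cov.
by apply: rt_trans (rt_step _ _ _ _ cov); apply: IH => //; lia.
Qed.

Definition run (w : seq nat) (i : nat) : nat :=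
  find (fun x => x < nth 0 w i) (drop i.+1 w).

(* For 213-avoiding y this is
   [inv_below x y] (lemma [inv_below_runs]); on words of labelled trees it is the
   planar Tamari order (lemmas [tamari_runs] and [runs_tamari]). *)
Definition runs_le (x y : seq nat) : Prop :=
  [/\ size x = size y, same_ties x y & forall i, i < size x -> run y i <= run x i].

Lemma runs_le_refl w : runs_le w w.
Proof. by split. Qed.

Lemma runs_le_trans x y z : runs_le x y -> runs_le y z -> runs_le x z.
Proof.
case=> s1 e1 r1 [s2 e2 r2]; split; first by rewrite s1.
  by move=> i j hi hj; rewrite e1 // e2 -?s1.
by move=> i hi; apply: leq_trans (r2 i _) (r1 i hi); rewrite -s1.
Qed.

Lemma run_le w i : run w i <= size w - i.+1.
Proof. by rewrite /run -size_drop find_size. Qed.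

Lemma run_ge w i r : r <= size w - i.+1 ->
  (forall l, i < l -> l <= i + r -> nth 0 w i <= nth 0 w l) -> r <= run w i.
Proof.
move=> hr h; rewrite leqNgt; apply/negP => hf.
have hs : has (fun x => x < nth 0 w i) (drop i.+1 w).
  by rewrite has_find (leq_trans hf) // size_drop.
have := nth_find 0 hs; rewrite -/(run w i) nth_drop ltnNge h //; lia.
Qed.

Lemma run_nth w i l : i < l -> l <= i + run w i -> l < size w -> nth 0 w i <= nth 0 w l.
Proof.
move=> h1 h2 h3; rewrite leqNgt; apply/negbT.
have := @before_find _ 0 (fun x => x < nth 0 w i) (drop i.+1 w) (l - i.+1).
by rewrite nth_drop subnKC //; apply; rewrite /run in h2; lia.
Qed.

(* For a 213-avoiding word y the inversion order and the run order agree: a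
   letter of y is never followed, inside its run, by a smaller letter that is
   later followed by a larger one. *)
Lemma inv_below_runs x y : avoids213 y -> (inv_below x y <-> runs_le x y).
Proof.
move=> av; split.
- case=> sz e m; split => // i hi.
  apply: run_ge => [|l h1 h2]; first by rewrite sz run_le.
  have hl : l < size x by have := run_le y i; rewrite -sz; lia.
  by apply: (m i l h1 hl); apply: run_nth => //; rewrite -sz.
- case=> sz e r; split => // i j hij hj hy.
  have hi : i < size x := ltn_trans hij hj.
  case: (ltngtP (nth 0 y i) (nth 0 y j)) hy => // hy _; last first.
    by apply: eq_leq; apply/eqP; rewrite e // hy.
  have hyr : j - i <= run y i.
    apply: run_ge => [|l h1 h2]; first by rewrite -sz; lia.
    case: (ltngtP l j) => h3; [|lia|by rewrite h3 ltnW].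
    rewrite leqNgt; apply/negP => hl; apply: (av i l j h1 h3); first by rewrite -sz.
    by split.
  by apply: (run_nth x i j hij _ hj); have := r i hi; lia.
Qed.

Lemma run_full w p : (forall q, p < q -> q < size w -> nth 0 w p <= nth 0 w q) ->
  run w p = size w - p.+1.
Proof.
move=> h; apply/eqP; rewrite eqn_leq run_le run_ge // => l h1 h2.
by apply: h => //; lia.
Qed.

Lemma run_full_le w p q : size w - p.+1 <= run w p -> p < q -> q < size w ->
  nth 0 w p <= nth 0 w q.
Proof. by move=> h h1 h2; apply: run_nth => //; lia. Qed.

Lemma find_min_cat (T : Type) (p : pred T) s1 s2 :
  minn (find p (s1 ++ s2)) (size s1) = find p s1.
Proof.
rewrite find_cat; case: (boolP (has p s1)) => h.
  by rewrite has_find in h; apply/minn_idPl/ltnW.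
by rewrite (hasNfind h); apply/minn_idPr; rewrite leq_addr.
Qed.

Lemma drop_catS (A B : seq nat) i : i < size A -> drop i.+1 (A ++ B) = drop i.+1 A ++ B.
Proof.
move=> hi; rewrite drop_cat; case: ltnP => h //.
by rewrite (_ : i.+1 - size A = 0) ?drop0 ?drop_oversize //; lia.
Qed.

Lemma run_catl A B i : i < size A -> run A i = minn (run (A ++ B) i) (size A - i.+1).
Proof.
by move=> hi; rewrite /run nth_cat hi drop_catS // -size_drop find_min_cat.
Qed.

Lemma run_catr A B i : run (A ++ B) (size A + i) = run B i.
Proof.
rewrite /run nth_cat ltnNge leq_addr /= addKn -addnS.
by rewrite drop_cat ltnNge leq_addr /= addKn.
Qed.

Lemma runs_le_catl A1 B1 A2 B2 : size A1 = size A2 ->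
  runs_le (A1 ++ B1) (A2 ++ B2) -> runs_le A1 A2.
Proof.
move=> sA [s e r]; split => //.
  move=> i j hi hj; have := e i j; rewrite size_cat !nth_cat -sA hi hj; apply; lia.
move=> i hi; rewrite (@run_catl A1 B1) // (@run_catl A2 B2) -?sA //.
have := r i; rewrite size_cat => h; have := h ltac:(lia); lia.
Qed.

Lemma runs_le_catr A1 B1 A2 B2 : size A1 = size A2 ->
  runs_le (A1 ++ B1) (A2 ++ B2) -> runs_le B1 B2.
Proof.
move=> sA [s e r]; split.
- by move: s; rewrite !size_cat sA; lia.
- move=> i j hi hj; have := e (size A1 + i) (size A1 + j); rewrite size_cat !nth_cat.
  rewrite sA !ltnNge !leq_addr /= !addKn => h; apply: h; lia.
- move=> i hi; have := r (size A1 + i); rewrite size_cat run_catr sA run_catr.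
  by apply; lia.
Qed.

Lemma runs_le_cons a1 a2 B1 B2 : runs_le (a1 :: B1) (a2 :: B2) -> runs_le B1 B2.
Proof. exact: (@runs_le_catr [:: a1] B1 [:: a2] B2). Qed.

(* A layout is a word B0 s1 B1 s2 B2 ... sn Bn made of blocks separated by
   single letters; [block B0 P q] is its q-th block (q <= n) and [sep P p] its
   (p+1)-th separator (p < n).  The word of a labelled node is a layout whose
   blocks are the words of the children and whose separators are its label. *)
Definition layout (B0 : seq nat) (P : seq (nat * seq nat)) : seq nat :=
  B0 ++ flatten (map (fun p => p.1 :: p.2) P).

Definition block (B0 : seq nat) (P : seq (nat * seq nat)) (q : nat) : seq nat :=
  nth [::] (B0 :: map snd P) q.

Definition sep (P : seq (nat * seq nat)) (p : nat) : nat := (nth (0, [::]) P p).1.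

Lemma layout_nil B0 : layout B0 [::] = B0.
Proof. by rewrite /layout cats0. Qed.

Lemma layout_cons B0 s B P : layout B0 ((s, B) :: P) = B0 ++ s :: layout B P.
Proof. by []. Qed.

Fixpoint seps_lt_prev (B0 : seq nat) (P : seq (nat * seq nat)) : Prop :=
  match P with
  | [::] => True
  | (s, B) :: P' => (forall x, x \in B0 -> s < x) /\ seps_lt_prev B P'
  end.

Fixpoint seps_le_next (P : seq (nat * seq nat)) : Prop :=
  match P with
  | [::] => True
  | (s, B) :: P' => (forall x, x \in layout B P' -> s <= x) /\ seps_le_next P'
  end.

Definition disjoint_blocks (B0 : seq nat) (P : seq (nat * seq nat)) : Prop :=
  (forall q q' x, q <= size P -> q' <= size P -> q != q' ->
     x \in block B0 P q -> x \in block B0 P q' -> False) /\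
  (forall p q, p < size P -> q <= size P -> sep P p \in block B0 P q -> False).

Lemma disjoint_sep_block B0 P p q r : disjoint_blocks B0 P ->
  p < size P -> q <= size P -> r < size (block B0 P q) ->
  (sep P p == nth 0 (block B0 P q) r) = false.
Proof.
by case=> _ d hp hq hr; apply/negbTE/negP => /eqP e; apply: (d p q) => //; rewrite e mem_nth.
Qed.

Lemma disjoint_block_block B0 P q q' r r' : disjoint_blocks B0 P ->
  q <= size P -> q' <= size P -> q != q' ->
  r < size (block B0 P q) -> r' < size (block B0 P q') ->
  (nth 0 (block B0 P q) r == nth 0 (block B0 P q') r') = false.
Proof.
case=> d _ hq hq' nq hr hr'; apply/negbTE/negP => /eqP e.
apply: (d q q' (nth 0 (block B0 P q) r) hq hq' nq); first exact: mem_nth.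
by rewrite e; exact: mem_nth.
Qed.

Lemma layout_cases B0 P B0' P' i : size P = size P' ->
  (forall q, q <= size P -> size (block B0 P q) = size (block B0' P' q)) ->
  i < size (layout B0 P) ->
  (exists p, [/\ p < size P, nth 0 (layout B0 P) i = sep P p
                & nth 0 (layout B0' P') i = sep P' p])
  \/ (exists q r, [/\ q <= size P, r < size (block B0 P q),
                     nth 0 (layout B0 P) i = nth 0 (block B0 P q) r
                   & nth 0 (layout B0' P') i = nth 0 (block B0' P' q) r]).
Proof.
elim: P B0 B0' P' i => [|[s B] P IH] B0 B0' P' i hs hb hi.
  case: P' hs hb => // _ hb; right; exists 0, i; move: hi.
  by rewrite !layout_nil => hi; split.
case: P' hs hb => [//|[s' B'] P'] [hs] hb.
have hb0 := hb 0 erefl; rewrite /block /= in hb0.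
move: hi; rewrite !layout_cons !nth_cat -hb0 size_cat /= => hi.
case: (ltngtP i (size B0)) => h; first by right; exists 0, i; split.
  have hb' q : q <= size P -> size (block B P q) = size (block B' P' q) by apply: (hb q.+1).
  have e : i - size B0 = (i - size B0 - 1).+1 by lia.
  case: (IH B B' P' (i - size B0 - 1) hs hb' ltac:(lia)) => [[p [h1 h2 h3]]|[q [r [h1 h2 h3 h4]]]].
    by left; exists p.+1; rewrite e /=; split.
  by right; exists q.+1, r; rewrite e /=; split.
by left; exists 0; rewrite h subnn; split.
Qed.

Lemma layout_same_ties B0 P B0' P' : size P = size P' ->
  (forall q, q <= size P -> runs_le (block B0 P q) (block B0' P' q)) ->
  (forall p p', p < size P -> p' < size P ->
     (sep P p == sep P p') = (sep P' p == sep P' p')) ->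
  disjoint_blocks B0 P -> disjoint_blocks B0' P' -> same_ties (layout B0 P) (layout B0' P').
Proof.
move=> hs hq hsp d d' i j hi hj.
have hb q : q <= size P -> size (block B0 P q) = size (block B0' P' q) by case/hq.
have [[p [p1 -> ->]]|[q [r [q1 q2 -> ->]]]] := layout_cases B0 P B0' P' i hs hb hi;
have [[p' [p1' -> ->]]|[q' [r' [q1' q2' -> ->]]]] := layout_cases B0 P B0' P' j hs hb hj.
- exact: hsp.
- by rewrite !disjoint_sep_block // -?hs // -hb.
- by rewrite ![_ == sep _ _]eq_sym !disjoint_sep_block // -?hs // -hb.
- case: (eqVneq q q') => [e|nq]; first by subst q'; case: (hq q q1) => _ + _; apply.
  by rewrite !disjoint_block_block // -?hs // -hb.
Qed.

Lemma size_layout B0 P B0' P' : size P = size P' ->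
  (forall q, q <= size P -> size (block B0 P q) = size (block B0' P' q)) ->
  size (layout B0 P) = size (layout B0' P').
Proof.
elim: P B0 B0' P' => [|[s B] P IH] B0 B0' [|[s' B'] P'] //= hs hb.
  by rewrite !layout_nil; apply: (hb 0).
rewrite !layout_cons !size_cat /= (IH B B' P') //; first by rewrite (hb 0).
- by case: hs.
- by move=> q hq; apply: (hb q.+1).
Qed.

Lemma run_before_sep B0 s X i : (forall x, x \in B0 -> s < x) -> i < size B0 ->
  run (B0 ++ s :: X) i = run B0 i.
Proof.
move=> hf hi; rewrite /run nth_cat hi drop_catS // find_cat.
case: ifP => // hn; rewrite /= hf ?mem_nth // addn0.
by apply/eqP; rewrite eqn_leq find_size /= leqNgt -has_find hn.
Qed.

Lemma drop_sep (B0 : seq nat) s X : drop (size B0).+1 (B0 ++ s :: X) = X.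
Proof. by rewrite -cat_rcons drop_size_cat ?size_rcons. Qed.

Lemma run_at_sep_le B0 s X : run (B0 ++ s :: X) (size B0) <= size X.
Proof. rewrite /run drop_sep; exact: find_size. Qed.

Lemma run_at_sep B0 s X : (forall x, x \in X -> s <= x) -> run (B0 ++ s :: X) (size B0) = size X.
Proof.
move=> h; rewrite /run drop_sep nth_cat ltnn subnn /=.
apply/eqP; rewrite eqn_leq find_size /= leqNgt -has_find; apply/hasP => -[x hx].
by rewrite ltnNge h.
Qed.

Lemma run_after_sep B0 s X j : run (B0 ++ s :: X) (size B0 + j.+1) = run X j.
Proof.
by rewrite run_catr (run_catr [:: s] X j).
Qed.

Lemma layout_runs B0 P B0' P' : size P = size P' ->
  (forall q, q <= size P -> runs_le (block B0 P q) (block B0' P' q)) ->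
  seps_lt_prev B0 P -> seps_lt_prev B0' P' -> seps_le_next P ->
  forall i, i < size (layout B0 P) -> run (layout B0' P') i <= run (layout B0 P) i.
Proof.
elim: P B0 B0' P' => [|[s B] P IH] B0 B0' [|[s' B'] P'] // hs hq hf hf' hm i hi.
  by move: hi; rewrite !layout_nil => hi; case: (hq 0 erefl) => _ _; apply.
case: hf hf' hm => f1 f2 [f1' f2'] [m1 m2].
have hb0 : size B0 = size B0' by case: (hq 0 erefl).
move: hi; rewrite !layout_cons size_cat /= => hi.
case: (ltngtP i (size B0)) => h.
- rewrite (@run_before_sep B0 s (layout B P) i) //.
  rewrite (@run_before_sep B0' s' (layout B' P') i) -?hb0 //.
  by case: (hq 0 erefl) => _ _; apply.
- have -> : i = size B0 + (i - size B0 - 1).+1 by lia.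
  rewrite (@run_after_sep B0 s (layout B P)) hb0 (@run_after_sep B0' s' (layout B' P')).
  apply: IH => //.
  + by case: hs.
  + by move=> q hq'; apply: (hq q.+1).
  + lia.
- rewrite h (@run_at_sep B0 s (layout B P)) // hb0.
  have -> : size (layout B P) = size (layout B' P').
    apply: size_layout; first by case: hs.
    by move=> q hq'; case: (hq q.+1 hq').
  exact: (@run_at_sep_le B0' s' (layout B' P')).
Qed.

Lemma runs_le_layout B0 P B0' P' : size P = size P' ->
  (forall q, q <= size P -> runs_le (block B0 P q) (block B0' P' q)) ->
  (forall p p', p < size P -> p' < size P -> (sep P p == sep P p') = (sep P' p == sep P' p')) ->
  disjoint_blocks B0 P -> disjoint_blocks B0' P' ->
  seps_lt_prev B0 P -> seps_lt_prev B0' P' -> seps_le_next P ->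
  runs_le (layout B0 P) (layout B0' P').
Proof.
move=> hs hq hsp d d' f f' m; split.
- by apply: size_layout => // q h; case: (hq q h).
- exact: layout_same_ties.
- exact: layout_runs.
Qed.


Fixpoint ptree_ind_In (P : ptree -> Prop) (HL : P PLeaf)
  (HN : forall cs, (forall c, List.In c cs -> P c) -> P (PNode cs)) (t : ptree) : P t :=
  match t with
  | PLeaf => HL
  | PNode cs => HN cs ((fix go (l : seq ptree) : forall c, List.In c l -> P c :=
       match l with
       | [::] => fun c (H : List.In c [::]) => False_ind _ H
       | c0 :: l' => fun c H => match H with
                     | or_introl E => eq_ind c0 P (ptree_ind_In P HL HN c0) c E
                     | or_intror H' => go l' c H'
                     end
       end) cs)
  end.

Fixpoint ltree_ind_In (P : ltree -> Prop) (HL : P LLeaf)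
  (HN : forall k cs, (forall c, List.In c cs -> P c) -> P (LNode k cs)) (t : ltree) : P t :=
  match t with
  | LLeaf => HL
  | LNode k cs => HN k cs ((fix go (l : seq ltree) : forall c, List.In c l -> P c :=
       match l with
       | [::] => fun c (H : List.In c [::]) => False_ind _ H
       | c0 :: l' => fun c H => match H with
                     | or_introl E => eq_ind c0 P (ltree_ind_In P HL HN c0) c E
                     | or_intror H' => go l' c H'
                     end
       end) cs)
  end.

(* Trees carry no equality test, so membership among children is [List.In]. *)
Lemma In_nth (T : Type) (x0 : T) (l : seq T) i : i < size l -> List.In (nth x0 l i) l.
Proof. by elim: l i => //= x l IH [|i] h; [left | right; apply: IH]. Qed.

Lemma In_rcons (T : Type) (A : seq T) c : List.In c (rcons A c).
Proof. by elim: A => /= [|a A IH]; [left | right]. Qed.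

Lemma In_rcons_l (T : Type) (A : seq T) c c' : List.In c' A -> List.In c' (rcons A c).
Proof. by elim: A => //= a A IH [<-|h]; [left | right; apply: IH]. Qed.

Lemma allP_In (T : Type) (p : pred T) l : reflect (forall c, List.In c l -> p c) (all p l).
Proof.
elim: l => [|c l IH] /=; first by left.
apply: (iffP andP) => [[hc /IH hl] d [<-|hd]|h]; [by [] | exact: hl |].
by split; [apply: h; left | apply/IH => d hd; apply: h; right].
Qed.

Lemma mem_flatten_map (T : Type) (f : T -> seq nat) (l : seq T) x :
  x \in flatten (map f l) <-> exists c, List.In c l /\ x \in f c.
Proof.
elim: l => [|c l IH] /=; first by split => // -[c []].
rewrite mem_cat; split.
  case/orP => [h|/IH [c' [h1 h2]]]; first by exists c; split => //; left.
  by exists c'; split => //; right.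
move=> [c' [[<-|h1] h2]]; first by rewrite h2.
by apply/orP; right; apply/IH; exists c'.
Qed.

Lemma labels_node k cs : labels (LNode k cs) = k :: flatten (map labels cs).
Proof. by []. Qed.

Lemma word_cons k c cs :
  word (LNode k (c :: cs)) = word c ++ flatten (map (cons k) (map word cs)).
Proof. by []. Qed.

Lemma word_rcons k (A : seq ltree) y : 0 < size A ->
  word (LNode k (rcons A y)) = word (LNode k A) ++ k :: word y.
Proof.
case: A => // a A _; rewrite !word_cons map_rcons -cats1 map_cat flatten_cat /= cats0.
by rewrite catA.
Qed.

Lemma mem_word_node k cs x :
  x \in word (LNode k cs) -> x = k \/ exists c, List.In c cs /\ x \in word c.
Proof.
case: cs => //= c cs; rewrite mem_cat => /orP[h|]; first by right; exists c; split => //; left.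
rewrite -map_comp => /mem_flatten_map [c' [h1]] /=.
rewrite in_cons => /orP[/eqP ->|h]; first by left.
by right; exists c'; split => //; right.
Qed.

Lemma word_sub_labels u x : x \in word u -> x \in labels u.
Proof.
elim/ltree_ind_In: u x => // k cs IH x /mem_word_node [->|[c [h1 h2]]].
  by rewrite in_cons eqxx.
by rewrite labels_node in_cons; apply/orP; right; apply/mem_flatten_map; exists c; auto.
Qed.

Lemma wf_child k cs c : wf_pt (pi_tree (LNode k cs)) -> List.In c cs -> wf_pt (pi_tree c).
Proof. by move=> /= /andP[_]; rewrite all_map => /allP_In; apply. Qed.

Definition labelled (u : ltree) : bool := increasing u && uniq (labels u).

Lemma lab_gt_of k c : (forall x, x \in labels c -> k < x) -> lab_gt k c.
Proof. by case: c => //= k' cs h; apply: h; rewrite in_cons eqxx. Qed.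

Lemma lab_gt_trans k k' c : k < k' -> lab_gt k' c -> lab_gt k c.
Proof. by case: c => //= k'' _; apply: ltn_trans. Qed.

Lemma inc_labels_gt u k : increasing u -> lab_gt k u -> forall x, x \in labels u -> k < x.
Proof.
elim/ltree_ind_In: u k => // k' cs IH k /= /andP[/allP_In h1 /allP_In h2] hk x.
rewrite in_cons => /orP[/eqP->//|/mem_flatten_map [c [hc hx]]].
by apply: ltn_trans hk (IH c hc _ (h2 c hc) (h1 c hc) x hx).
Qed.

Lemma inc_child_gt k cs c x :
  increasing (LNode k cs) -> List.In c cs -> x \in labels c -> k < x.
Proof.
by move=> /= /andP[/allP_In h1 /allP_In h2] hc; apply: (inc_labels_gt c k (h2 c hc) (h1 c hc)).
Qed.

Lemma word_ge_root k cs x : increasing (LNode k cs) -> x \in word (LNode k cs) -> k <= x.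
Proof.
move=> g /mem_word_node [->//|[c [hc hx]]].
exact/ltnW/(inc_child_gt k cs c x g hc (word_sub_labels c x hx)).
Qed.

Lemma labelled_child k cs c : labelled (LNode k cs) -> List.In c cs -> labelled c.
Proof.
case/andP => /= /andP[_ /allP_In hi] /andP[_ hu] hc; rewrite /labelled hi //=.
elim: cs {hi} hu hc => //= c' cs IH; rewrite cat_uniq => /and3P[h1 _ h3] [<-//|]; exact: IH.
Qed.

Lemma notin_child k cs c : uniq (labels (LNode k cs)) -> List.In c cs -> k \notin word c.
Proof.
rewrite labels_node cons_uniq => /andP[h _] hc; apply/negP => /word_sub_labels hk.
by move/negP: h; apply; apply/mem_flatten_map; exists c.
Qed.

Lemma uniq_flatten_nth (L : seq (seq nat)) q q' x : uniq (flatten L) ->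
  q < size L -> q' < size L -> q != q' ->
  x \in nth [::] L q -> x \in nth [::] L q' -> False.
Proof.
elim: L q q' => //= B L IH q q' u hq hq' hne h1 h2.
move: u; rewrite cat_uniq => /and3P[_ /hasPn /(_ x) h u].
have hf r : r < size L -> x \in nth [::] L r -> x \in flatten L.
  by move=> hr hx; apply/flattenP; exists (nth [::] L r) => //; exact: mem_nth.
case: q q' hq hq' hne h1 h2 => [|q] [|q'] //= hq hq' hne h1 h2.
- by move: (h (hf q' hq' h2)); rewrite h1.
- by move: (h (hf q hq h1)); rewrite h2.
- exact: (IH q q').
Qed.

Definition node_seps (k : nat) (cs : seq ltree) : seq (nat * seq nat) :=
  map (fun c => (k, word c)) cs.

Lemma word_node k c cs : word (LNode k (c :: cs)) = layout (word c) (node_seps k cs).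
Proof. by rewrite /= /layout -!map_comp. Qed.

Lemma block_node k c cs q : q <= size cs ->
  block (word c) (node_seps k cs) q = word (nth LLeaf (c :: cs) q).
Proof.
move=> hq; rewrite /block /node_seps -map_comp.
by rewrite (eq_map (_ : snd \o _ =1 word)) // -(map_cons word c cs) (nth_map LLeaf).
Qed.

Lemma sep_node k cs p : p < size cs -> sep (node_seps k cs) p = k.
Proof. by move=> hp; rewrite /sep (nth_map LLeaf). Qed.

Lemma disjoint_node k c cs : uniq (labels (LNode k (c :: cs))) ->
  disjoint_blocks (word c) (node_seps k cs).
Proof.
rewrite labels_node cons_uniq => /andP[hk hu]; split; rewrite size_map.
- move=> q q' x hq hq' hne; rewrite !block_node // => h1 h2.
  apply: (uniq_flatten_nth (map labels (c :: cs)) q q' x) => //; rewrite ?size_map //.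
    by rewrite (nth_map LLeaf) //; apply: word_sub_labels.
  by rewrite (nth_map LLeaf) //; apply: word_sub_labels.
- move=> p q hp hq; rewrite sep_node // block_node // => /word_sub_labels h.
  move/negP: hk; apply; apply/flattenP; exists (labels (nth LLeaf (c :: cs) q)) => //.
  by rewrite -(nth_map LLeaf [::]) // mem_nth // size_map.
Qed.

Lemma seps_lt_prev_node k c cs :
  (forall d, List.In d (c :: cs) -> forall x, x \in labels d -> k < x) ->
  seps_lt_prev (word c) (node_seps k cs).
Proof.
elim: cs c => //= c2 cs IH c h; split; first by move=> x /word_sub_labels; apply: h; left.
by apply: IH => d hd; apply: h; right.
Qed.

Lemma seps_le_next_node k cs :
  (forall d, List.In d cs -> forall x, x \in labels d -> k < x) ->
  seps_le_next (node_seps k cs).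
Proof.
elim: cs => //= c2 cs IH h; split; last by apply: IH => d hd; apply: h; right.
move=> x; rewrite -word_node => /mem_word_node [->//|[d [hd hx]]].
exact/ltnW/(h d hd _ (word_sub_labels d x hx)).
Qed.

Lemma runs_le_node k k' cs cs' :
  labelled (LNode k cs) -> labelled (LNode k' cs') -> size cs = size cs' ->
  (forall i, i < size cs -> runs_le (word (nth LLeaf cs i)) (word (nth LLeaf cs' i))) ->
  runs_le (word (LNode k cs)) (word (LNode k' cs')).
Proof.
case: cs cs' => [|c cs] [|c' cs'] // /andP[gi gu] /andP[gi' gu'] [hs] hq.
rewrite !word_node; apply: runs_le_layout; rewrite ?size_map //.
- by move=> q hq'; rewrite !block_node -?hs //; exact: hq.
- by move=> p p' hp hp'; rewrite !sep_node -?hs // !eqxx.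
- exact: disjoint_node.
- exact: disjoint_node.
- by apply: seps_lt_prev_node => d hd x hx; apply: inc_child_gt gi hd hx.
- by apply: seps_lt_prev_node => d hd x hx; apply: inc_child_gt gi' hd hx.
- by apply: seps_le_next_node => d hd x hx; apply: inc_child_gt gi (or_intror hd) hx.
Qed.

Lemma nth_map_pi cs i : nth PLeaf (map pi_tree cs) i = pi_tree (nth LLeaf cs i).
Proof. by elim: cs i => [|c cs IH] [|i] //=. Qed.

Lemma same_shape_runs u1 u2 : labelled u1 -> labelled u2 -> pi_tree u1 = pi_tree u2 ->
  runs_le (word u1) (word u2).
Proof.
elim/ltree_ind_In: u1 u2 => [|k cs IH] [|k' cs'] //= g1 g2 e; try exact: runs_le_refl.
case: e => e; have hs : size cs = size cs' by rewrite -(size_map pi_tree) e size_map.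
apply: runs_le_node => // i hi; apply: IH.
- exact: In_nth.
- exact: labelled_child g1 (In_nth _ _ _ _ hi).
- by apply: labelled_child g2 (In_nth _ _ _ _ _); rewrite -hs.
- by rewrite -!nth_map_pi e.
Qed.

Definition labellable (t : ptree) : Prop :=
  forall s, exists u, [/\ pi_tree u = t, increasing u, uniq (labels u)
    & forall x, x \in labels u -> s <= x < s + size (labels u)].

Definition labellable_forest (cs : seq ptree) : Prop :=
  forall s, exists LS, [/\ map pi_tree LS = cs, all increasing LS,
    uniq (flatten (map labels LS))
    & forall x, x \in flatten (map labels LS) -> s <= x < s + size (flatten (map labels LS))].

Lemma labellable_forest_of cs : (forall c, List.In c cs -> labellable c) -> labellable_forest cs.
Proof.
elim: cs => [|c cs IH] h s; first by exists [::]; split.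
have [u [hu1 hu2 hu3 hu4]] := h c (or_introl erefl) s.
have [LS [h1 h2 h3 h4]] := IH (fun c' hc' => h c' (or_intror hc')) (s + size (labels u)).
exists (u :: LS); split => /=; rewrite ?hu1 ?h1 ?hu2 ?h2 //.
- rewrite cat_uniq hu3 h3 andbT /=; apply/hasPn => x /h4 hx; apply/negP => /hu4; lia.
- move=> x; rewrite mem_cat size_cat => /orP[/hu4|/h4]; lia.
Qed.

Lemma all_labellable t : labellable t.
Proof.
elim/ptree_ind_In: t => [|cs IH] s; first by exists LLeaf.
have [LS [h1 h2 h3 h4]] := labellable_forest_of cs IH s.+1.
exists (LNode s LS); split => /=; rewrite ?h1 //.
- rewrite h2 andbT; apply/allP_In => c hc; apply: lab_gt_of => x hx.
  have : x \in flatten (map labels LS) by apply/mem_flatten_map; exists c.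
  by move/h4; lia.
- by rewrite h3 andbT; apply/negP => /h4; lia.
- by move=> x; rewrite in_cons => /orP[/eqP->|/h4]; lia.
Qed.

Lemma labelled_exists t : exists u, labelled u /\ pi_tree u = t.
Proof. by have [u [h1 h2 h3 _]] := all_labellable t 0; exists u; rewrite /labelled h2 h3. Qed.

Lemma labelled_forest_ge cs s : exists LS, [/\ map pi_tree LS = cs, all increasing LS,
  uniq (flatten (map labels LS)) & forall x, x \in flatten (map labels LS) -> s <= x].
Proof.
have [LS [h1 h2 h3 h4]] := labellable_forest_of cs (fun c _ => all_labellable c) s.
by exists LS; split => // x /h4 /andP[].
Qed.

Lemma runs_le_Tswap k X Y : (forall x, x \in X ++ Y -> k <= x) ->
  k.+1 \notin X -> k \notin Y -> runs_le (X ++ Y) (Tswap k (X ++ Y)).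
Proof.
move=> hk hX hY; set W := X ++ Y; split; rewrite ?size_Tswap //.
  by move=> i j hi hj; rewrite !nth_Tswap // (inj_eq (swapl_inj k)).
move=> i hi.
have full : (forall l, i < l -> l < size W -> nth 0 W i <= nth 0 W l) ->
    run (Tswap k W) i <= run W i.
  by move=> h; rewrite (run_full _ _ h) -(size_Tswap k) run_le.
case: (eqVneq (nth 0 W i) k) => [e|n1].
  by apply: full => l _ hl; rewrite e hk // mem_nth.
case: (eqVneq (nth 0 W i) k.+1) => [e|n2].
  have iX : size X <= i.
    rewrite leqNgt; apply/negP => h; move: hX; rewrite -e /W nth_cat h mem_nth //.
  apply: full => l hil hl; rewrite e.
  have hlY : nth 0 W l = nth 0 Y (l - size X).
    by rewrite /W nth_cat ltnNge (leq_trans iX (ltnW hil)).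
  have : nth 0 W l != k.
    by apply/eqP => hlk; move: hY; rewrite -hlk hlY mem_nth //; move: hl; rewrite size_cat; lia.
  by move=> hne; rewrite ltn_neqAle eq_sym hne hk // mem_nth.
apply: eq_leq; rewrite /run nth_Tswap // TswapE -map_drop find_map; apply: eq_find => z /=.
by rewrite /preim /= swapl_lt // xpair_eqE negb_and ?n1 ?n2 orbT.
Qed.

Lemma map_word_id f u : {in labels u, f =1 id} -> map f (word u) = word u.
Proof.
move=> h; rewrite -[RHS]map_id; apply/eq_in_map => x /word_sub_labels; exact: h.
Qed.

Lemma map_word_node f k cs : (forall c, List.In c cs -> {in labels c, f =1 id}) ->
  map f (word (LNode k cs)) = word (LNode (f k) cs).
Proof.
case: cs => // c cs h; rewrite !word_cons map_cat map_word_id; last by apply: h; left.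
congr (_ ++ _); elim: cs h => //= c' cs IH h.
rewrite map_cat /= map_word_id; last by apply: h; right; left.
by rewrite IH // => d hd; apply: h; case: hd; [left | right; right].
Qed.

(* A left rotation at the root, on a convenient labelling: the rotated nodes get
   labels 0 and 1, everything else labels >= 2.  Then the rotation exchanges the
   letters 0 and 1 of the word, which shortens runs ([runs_le_Tswap]). *)
Section RootRotation.
Variables (LC LDs : seq ltree) (d1 : ltree).
Hypothesis LC_nonempty : 0 < size LC.
Hypothesis inc_forest : all increasing (LC ++ d1 :: LDs).
Hypothesis uniq_forest : uniq (flatten (map labels (LC ++ d1 :: LDs))).
Hypothesis big_forest : forall x, x \in flatten (map labels (LC ++ d1 :: LDs)) -> 2 <= x.

Let big c x : List.In c (LC ++ d1 :: LDs) -> x \in labels c -> 2 <= x.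
Proof. by move=> hc hx; apply: big_forest; apply/mem_flatten_map; exists c. Qed.

Let above c k : k < 2 -> List.In c (LC ++ d1 :: LDs) -> lab_gt k c.
Proof. by move=> hk hc; apply: lab_gt_of => x /(big c x hc); lia. Qed.

Let inC c : List.In c LC -> List.In c (LC ++ d1 :: LDs).
Proof. by move=> h; apply: List.in_or_app; left. Qed.

Let inD c : List.In c (d1 :: LDs) -> List.In c (LC ++ d1 :: LDs).
Proof. by move=> h; apply: List.in_or_app; right. Qed.

Let uniq01 : uniq (0 :: 1 :: flatten (map labels LC) ++ labels d1 ++ flatten (map labels LDs)).
Proof.
move: uniq_forest big_forest; rewrite map_cat flatten_cat /= => hu hb.
by rewrite /= hu !andbT; apply/andP; split; apply/negP => /hb.
Qed.

Let uniq01_perm s :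
  perm_eq s (0 :: 1 :: flatten (map labels LC) ++ labels d1 ++ flatten (map labels LDs)) ->
  uniq s.
Proof. by move=> pe; rewrite (perm_uniq pe); exact: uniq01. Qed.

Let allgt k : k < 2 -> all (lab_gt k) (LC ++ d1 :: LDs).
Proof. by move=> hk; apply/allP_In => c; apply: above. Qed.

Lemma labelled_rot_src : labelled (LNode 0 (rcons LC (LNode 1 (d1 :: LDs)))).
Proof.
apply/andP; split.
  move: (allgt 0 isT) (allgt 1 isT) inc_forest; rewrite !all_cat /=.
  move=> /and3P[g0C _ _] /and3P[_ g1 g1D] /and3P[iC i1 iD].
  by rewrite /= !all_rcons /= g0C g1 g1D iC i1 iD.
apply: uniq01_perm; rewrite labels_node -cats1 map_cat flatten_cat /= cats0.
by rewrite perm_cons -cat1s perm_catCA.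
Qed.

Lemma labelled_rot_dst : labelled (LNode 0 (LNode 1 (rcons LC d1) :: LDs)).
Proof.
apply/andP; split.
  move: (allgt 0 isT) (allgt 1 isT) inc_forest; rewrite !all_cat /=.
  move=> /and3P[_ _ g0D] /and3P[g1C g1 _] /and3P[iC i1 iD].
  by rewrite /= !all_rcons /= g0D g1C g1 iC i1 iD.
apply: uniq01_perm; rewrite labels_node /= -cats1 map_cat flatten_cat /= cats0.
by rewrite -catA.
Qed.

Let fixed c : List.In c (LC ++ d1 :: LDs) -> {in labels c, swapl 0 =1 id}.
Proof.
move=> hc x /(big c x hc) hx.
by rewrite /swapl /=; case: eqVneq => [e|_]; [lia | case: eqVneq => [e|_] //; lia].
Qed.

Let no_small k c x : k < 2 -> List.In c (LC ++ d1 :: LDs) -> x \in word c -> x != k.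
Proof. by move=> hk hc /word_sub_labels /(big c x hc) hx; apply/eqP => e; lia. Qed.

Lemma word_rot : word (LNode 0 (LNode 1 (rcons LC d1) :: LDs)) =
  Tswap 0 (word (LNode 0 (rcons LC (LNode 1 (d1 :: LDs))))).
Proof.
have s00 : swapl 0 0 = 1 by [].
have s01 : swapl 0 1 = 0 by [].
rewrite word_rcons // TswapE map_cat map_cons !map_word_node ?s00 ?s01.
- by rewrite word_cons word_rcons // -catA.
- by move=> c hc; apply: fixed (inD c hc).
- by move=> c hc; apply: fixed (inC c hc).
Qed.

Lemma runs_le_rot : runs_le (word (LNode 0 (rcons LC (LNode 1 (d1 :: LDs)))))
  (word (LNode 0 (LNode 1 (rcons LC d1) :: LDs))).
Proof.
rewrite word_rot word_rcons // -cat_rcons; apply: runs_le_Tswap => //.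
  rewrite mem_rcons in_cons /=; apply/negP => /mem_word_node [//|[c [hc hx]]].
  by move: (no_small 1 c 1 isT (inC c hc) hx); rewrite eqxx.
apply/negP => /mem_word_node [//|[c [hc hx]]].
by move: (no_small 0 c 0 isT (inD c hc) hx); rewrite eqxx.
Qed.

End RootRotation.

Lemma split_forest (LS : seq ltree) cs d1 ds : map pi_tree LS = cs ++ d1 :: ds ->
  exists LC ld1 LDs, [/\ LS = LC ++ ld1 :: LDs, map pi_tree LC = cs,
    pi_tree ld1 = d1 & map pi_tree LDs = ds].
Proof.
move=> e; exists (take (size cs) LS).
have eD : map pi_tree (drop (size cs) LS) = d1 :: ds by rewrite map_drop e drop_size_cat.
case eDS: (drop (size cs) LS) eD => [|ld1 LDs] //= [e1 e2].
exists ld1, LDs; split => //; first by rewrite -eDS cat_take_drop.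
by rewrite map_take e take_size_cat.
Qed.

Lemma root_rotation_runs cs d1 ds u w : cs <> [::] ->
  labelled u -> labelled w ->
  pi_tree u = PNode (rcons cs (PNode (d1 :: ds))) ->
  pi_tree w = PNode (PNode (rcons cs d1) :: ds) -> runs_le (word u) (word w).
Proof.
move=> hcs gu gw eu ew.
have [LS [h1 h2 h3 h4]] := labelled_forest_ge (cs ++ d1 :: ds) 2.
have [LC [ld1 [LDs [eLS eC e1 eD]]]] := split_forest _ _ _ _ h1.
subst LS; have sLC : 0 < size LC by rewrite -(size_map pi_tree) eC; case: (cs) hcs.
apply: runs_le_trans _ _ _ (same_shape_runs u _ gu (labelled_rot_src _ _ _ sLC h2 h3 h4) _)
  (runs_le_trans _ _ _ (runs_le_rot _ _ _ sLC h2 h3 h4)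
     (same_shape_runs _ w (labelled_rot_dst _ _ _ sLC h2 h3 h4) gw _)).
  by rewrite eu /= map_rcons eC /= e1 eD.
by rewrite ew /= map_rcons eC e1 eD.
Qed.

Lemma nth_mid (cs1 cs2 : seq ptree) c c' i : i != size cs1 ->
  nth PLeaf (cs1 ++ c :: cs2) i = nth PLeaf (cs1 ++ c' :: cs2) i.
Proof.
move=> hi; rewrite !nth_cat; case: ltnP => // h.
by rewrite (_ : i - size cs1 = (i - size cs1).-1.+1) //; move/eqP: hi; lia.
Qed.

Lemma rotation_runs s s' u w : lrot s s' -> labelled u -> labelled w ->
  pi_tree u = s -> pi_tree w = s' -> runs_le (word u) (word w).
Proof.
move=> hr; elim: hr u w => [cs d1 ds hcs hds|cs1 cs2 c c' hr IH] u w gu gw eu ew.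
  exact: (root_rotation_runs _ _ _ _ _ hcs gu gw eu ew).
case: u gu eu => // k us gu [eu]; case: w gw ew => // k' ws gw [ew].
have hs : size us = size ws.
  by rewrite -(size_map pi_tree us) -(size_map pi_tree ws) eu ew !size_cat.
apply: runs_le_node => // i hi; have hi' : i < size ws by rewrite -hs.
have p1 : pi_tree (nth LLeaf us i) = nth PLeaf (cs1 ++ c :: cs2) i by rewrite -nth_map_pi eu.
have p2 : pi_tree (nth LLeaf ws i) = nth PLeaf (cs1 ++ c' :: cs2) i by rewrite -nth_map_pi ew.
have g1 := labelled_child _ _ _ gu (In_nth _ _ _ _ hi).
have g2 := labelled_child _ _ _ gw (In_nth _ _ _ _ hi').
case: (eqVneq i (size cs1)) => [ei|ni].
  by apply: IH => //; [rewrite p1 ei | rewrite p2 ei]; rewrite nth_cat ltnn subnn.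
by apply: same_shape_runs => //; rewrite p1 p2 (nth_mid _ _ _ c').
Qed.

Lemma tamari_runs s t u w : pt_le s t -> labelled u -> labelled w ->
  pi_tree u = s -> pi_tree w = t -> runs_le (word u) (word w).
Proof.
move=> hst; elim: hst u w => [x y /rotation_runs //|x|x y z _ IH1 _ IH2] u w gu gw eu ew.
  by apply: same_shape_runs => //; rewrite eu ew.
have [m [gm em]] := labelled_exists y.
exact: runs_le_trans _ _ _ (IH1 u m gu gm eu em) (IH2 m w gm gw em ew).
Qed.

Lemma pt_le_in cs1 cs2 c c' :
  pt_le c c' -> pt_le (PNode (cs1 ++ c :: cs2)) (PNode (cs1 ++ c' :: cs2)).
Proof.
elim=> [x y h|x|x y z _ h1 _ h2]; last exact: rt_trans h1 h2; last exact: rt_refl.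
exact/rt_step/lrot_in.
Qed.

Lemma pt_le_children L1 L2 : List.Forall2 pt_le L1 L2 -> pt_le (PNode L1) (PNode L2).
Proof.
move=> h; suff : forall pre, pt_le (PNode (pre ++ L1)) (PNode (pre ++ L2)) by move/(_ [::]).
elim: h => [|a b L1' L2' hab _ IH] pre; first exact: rt_refl.
apply: rt_trans (pt_le_in pre L1' a b hab) _.
by rewrite -!cat_rcons; apply: IH.
Qed.

(* A right spine context: [plug R x] hangs x as the last child of a chain of
   nodes whose other children are the forests of R (outermost first). *)
Definition plug (R : seq (seq ptree)) (x : ptree) : ptree :=
  foldr (fun A acc => PNode (rcons A acc)) x R.

Lemma tamari_spine R s1 ss : all (fun A => 0 < size A) R -> 0 < size ss ->
  pt_le (plug R (PNode (s1 :: ss))) (PNode (plug R s1 :: ss)).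
Proof.
elim: R => [|A R IH] /=; first by move=> _ _; exact: rt_refl.
case/andP=> hA hR hss.
apply: rt_trans (_ : pt_le _ (PNode (rcons A (PNode (plug R s1 :: ss))))) _.
  by rewrite -!cats1; apply: pt_le_in; apply: IH.
by apply/rt_step/lrot_root; [case: (A) hA | case: (ss) hss].
Qed.

(* Labelled right spine contexts; [preW R] is the part of the word before the
   hole and [preL R] the labels outside the hole. *)
Definition plugL (R : seq (nat * seq ltree)) (x : ltree) : ltree :=
  foldr (fun p acc => LNode p.1 (rcons p.2 acc)) x R.

Fixpoint preW (R : seq (nat * seq ltree)) : seq nat :=
  match R with [::] => [::] | p :: R' => word (LNode p.1 p.2) ++ p.1 :: preW R' end.

Fixpoint preL (R : seq (nat * seq ltree)) : seq nat :=
  match R with [::] => [::] | p :: R' => p.1 :: flatten (map labels p.2) ++ preL R' end.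

Definition spine_ok (R : seq (nat * seq ltree)) : bool := all (fun p => 0 < size p.2) R.

Lemma word_plugL R x : spine_ok R -> word (plugL R x) = preW R ++ word x.
Proof.
elim: R => // [[k A] R] IH /andP[hA hR].
change (word (LNode k (rcons A (plugL R x))) = (word (LNode k A) ++ k :: preW R) ++ word x).
by rewrite word_rcons // (IH hR) -catA.
Qed.

Lemma labels_plugL R x : labels (plugL R x) = preL R ++ labels x.
Proof.
elim: R => //= [[k A] R] IH /=.
by rewrite -cats1 map_cat flatten_cat /= cats0 IH -catA.
Qed.

Lemma pi_plugL R x : pi_tree (plugL R x) = plug (map (fun p => map pi_tree p.2) R) (pi_tree x).
Proof. by elim: R => //= [[k A] R] IH /=; rewrite map_rcons IH. Qed.

Lemma spine_ok_plug R : spine_ok R -> all (fun A => 0 < size A) (map (fun p => map pi_tree p.2) R).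
Proof. by elim: R => //= [[k A] R] IH /andP[h1 h2]; rewrite size_map h1 IH. Qed.

Lemma preW_sub R x : x \in preW R -> x \in preL R.
Proof.
elim: R => // [[k A] R] IH.
change (x \in word (LNode k A) ++ k :: preW R -> x \in k :: flatten (map labels A) ++ preL R).
rewrite mem_cat in_cons => /orP[/word_sub_labels|/orP[/eqP->|/IH h]].
- by rewrite labels_node !in_cons mem_cat => /orP[->|->]; rewrite ?orbT.
- by rewrite in_cons eqxx.
- by rewrite in_cons mem_cat h !orbT.
Qed.

Lemma increasing_plug R x y : increasing (plugL R x) -> increasing y ->
  (forall k, lab_gt k x -> lab_gt k y) -> increasing (plugL R y).
Proof.
move=> hx hy hk.
suff [] : (forall k, lab_gt k (plugL R x) -> lab_gt k (plugL R y)) /\ increasing (plugL R y) by [].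
elim: R hx => [|[k A] R IH] //= hx.
move: hx; rewrite !all_rcons => /andP[/andP[g1 g2] /andP[i1 i2]].
have [IH1 IH2] := IH i1; split; first by move=> k'.
by rewrite IH1 // g2 IH2 i2.
Qed.

Lemma increasing_plug_sub R x : increasing (plugL R x) -> increasing x.
Proof.
by elim: R => //= [[k A] R] IH /=; rewrite !all_rcons => /andP[_ /andP[/IH]].
Qed.

Lemma wf_plug R x y : wf_pt (pi_tree (plugL R x)) -> wf_pt (pi_tree y) ->
  wf_pt (pi_tree (plugL R y)).
Proof.
elim: R => //= [[k A] R] IH; rewrite !map_rcons !size_rcons !all_rcons.
by case/andP => h1 /andP[h2 h3] hy; rewrite h1 h3 IH.
Qed.

Lemma wf_plug_sub R x : wf_pt (pi_tree (plugL R x)) -> wf_pt (pi_tree x).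
Proof.
by elim: R => //= [[k A] R] IH; rewrite map_rcons all_rcons => /andP[_ /andP[/IH]].
Qed.

Lemma labelled_plug_sub R x : labelled (plugL R x) -> labelled x.
Proof.
case/andP => h1; rewrite labels_plugL cat_uniq => /and3P[_ _ h3].
by rewrite /labelled (increasing_plug_sub _ _ h1) h3.
Qed.

Lemma labelled_plug R x y : labelled (plugL R x) -> labelled y ->
  (forall k, lab_gt k x -> lab_gt k y) -> {subset labels y <= labels x} ->
  labelled (plugL R y).
Proof.
case/andP => i1 u1 /andP[i2 u2] hk hz; rewrite /labelled (increasing_plug _ _ _ i1 i2 hk) /=.
move: u1; rewrite !labels_plugL !cat_uniq => /and3P[h1 /hasPn h2 h3]; rewrite h1 u2 andbT /=.
by apply/hasPn => z /hz /h2.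
Qed.

Lemma nth_after_sep (X Y : seq nat) k j : nth 0 (X ++ k :: Y) (size X + j.+1) = nth 0 Y j.
Proof. by rewrite nth_cat ltnNge leq_addr /= addKn. Qed.

Lemma spine_decomposition u r p : labelled u -> wf_pt (pi_tree u) ->
  p < size (word u) -> nth 0 (word u) p = r ->
  (forall q, p < q -> q < size (word u) -> r <= nth 0 (word u) q) ->
  exists R cs, u = plugL R (LNode r cs) /\ spine_ok R.
Proof.
elim/ltree_ind_In: u r p => [|k cs IH] r p g wf hp hk hq; first by [].
case: (eqVneq k r) => [<-|nk]; first by exists [::], cs.
have /andP[h2 _] := wf; rewrite size_map in h2.
case/lastP: cs IH g wf h2 hp hk hq => [//|A c] IH g wf h2 hp hk hq.
have sA : 0 < size A by rewrite size_rcons in h2.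
rewrite word_rcons // in hp hk hq; set X := word (LNode k A) in hp hk hq.
have gi : increasing (LNode k (rcons A c)) by case/andP: g.
case: (ltngtP p (size X)) => h.
- (* r would be a label strictly inside the left part, hence larger than k *)
  have hkX : r <= k.
    by have := hq (size X) h; rewrite size_cat /= nth_cat ltnn subnn /=; apply; lia.
  have : r \in X by rewrite -hk nth_cat h; apply: mem_nth.
  move/mem_word_node => [e|[c' [hc' hx]]]; first by move: nk; rewrite e eqxx.
  by have := inc_child_gt _ _ _ _ gi (In_rcons_l _ _ _ _ hc') (word_sub_labels _ _ hx); lia.
-
  set p' := p - size X - 1.
  have ep : p = size X + p'.+1 by rewrite /p'; lia.
  rewrite ep nth_after_sep size_cat /= in hk hp.
  have hq' q : p' < q -> q < size (word c) -> r <= nth 0 (word c) q.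
    by move=> hq1 hq2; have := hq (size X + q.+1); rewrite nth_after_sep size_cat /=; apply; lia.
  have [R' [cs' [e1 e2]]] := IH c (In_rcons _ _ _) r p'
    (labelled_child _ _ _ g (In_rcons _ _ _)) (wf_child _ _ _ wf (In_rcons _ _ _))
    ltac:(lia) hk hq'.
  by exists ((k, A) :: R'), cs'; rewrite /= -e1 /spine_ok /= sA.
- by move: hk; rewrite h nth_cat ltnn subnn /= => e; move: nk; rewrite e eqxx.
Qed.

Lemma find_eq (s1 s2 : seq nat) (a b : pred nat) : size s1 = size s2 ->
  (forall i, i < size s1 -> a (nth 0 s1 i) = b (nth 0 s2 i)) -> find a s1 = find b s2.
Proof.
elim: s1 s2 => [|x s1 IH] [|y s2] //= [hs] h.
rewrite (h 0 erefl); case: (b y) => //; congr S; apply: IH => // i hi.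
exact: (h i.+1).
Qed.

Lemma index_block r (w : seq nat) (L : seq (seq nat)) : r \notin w ->
  index r (w ++ flatten (map (cons r) L)) = size w.
Proof.
move=> h; rewrite index_cat (negbTE h); case: L => [|l L] /=; first by rewrite addn0.
by rewrite eqxx addn0.
Qed.

Lemma match_blocks (P : ltree -> ltree -> Prop) r r' A B :
  (forall a b, List.In a A -> List.In b B -> runs_le (word a) (word b) -> P a b) ->
  (forall a, List.In a A -> r \notin word a) -> (forall b, List.In b B -> r' \notin word b) ->
  runs_le (flatten (map (cons r) (map word A))) (flatten (map (cons r') (map word B))) ->
  List.Forall2 P A B.
Proof.
elim: A B => [|a A IH] [|b B] hP hA hB hq; try by [constructor | case: hq].
have hq1 := runs_le_cons _ _ _ _ hq; case: hq => _ e _.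
have sz : size (word a) = size (word b).
  rewrite -(index_block r (word a) (map word A)) ?hA //; last by left.
  rewrite -(index_block r' (word b) (map word B)) ?hB //; last by left.
  apply: find_eq; first by case: hq1.
  by move=> i hi; have := e i.+1 0 hi erefl.
constructor; first by apply: hP; [left | left | exact: runs_le_catl sz hq1].
apply: IH; last exact: runs_le_catr sz hq1.
- by move=> a' b' ha hb; apply: hP; right.
- by move=> a' ha; apply: hA; right.
- by move=> b' hb; apply: hB; right.
Qed.

Lemma spine_label_fresh R r s1 ss : labelled (plugL R (LNode r (s1 :: ss))) ->
  r \notin preW R ++ word s1.
Proof.
move=> g; have /andP[_ gxu] := labelled_plug_sub _ _ g.
rewrite mem_cat negb_or (notin_child _ _ _ gxu (or_introl erefl)) andbT.
apply/negP => /preW_sub hk; case/andP: g => _.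
rewrite labels_plugL cat_uniq labels_node => /and3P[_ /hasPn /(_ r (mem_head _ _))].
by rewrite hk.
Qed.

(* Splitting at the root of v = r'(v1, vs'): if word u lies below word v in the
   run order, the first r' of word v faces a letter r of word u that no later
   letter undercuts, i.e. the label of a right-spine node r(s1, ss) of u.  Both
   words split there: the prefix of word u up to the end of s1 faces word v1, and
   the remaining blocks face each other. *)
Lemma runs_le_split u r' v1 vs' : labelled u -> wf_pt (pi_tree u) ->
  labelled (LNode r' (v1 :: vs')) -> 0 < size vs' ->
  runs_le (word u) (word (LNode r' (v1 :: vs'))) ->
  exists R r s1 ss, [/\ u = plugL R (LNode r (s1 :: ss)), spine_ok R, 0 < size ss,
    runs_le (preW R ++ word s1) (word v1)
    & runs_le (flatten (map (cons r) (map word ss))) (flatten (map (cons r') (map word vs')))].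
Proof.
move=> gu wu /andP[gvi gvu] hvs hq.
set V := word (LNode r' (v1 :: vs')) in hq; set p := size (word v1).
have eV : V = word v1 ++ flatten (map (cons r') (map word vs')) by [].
have hVp : nth 0 V p = r'.
  by rewrite eV nth_cat ltnn subnn; case: (vs') hvs.
have hpV : p < size V by rewrite eV size_cat; case: (vs') hvs => //= *; lia.
(* the run of r' in V is full, hence so is the facing run in word u *)
have Vfull : run V p = size V - p.+1.
  by apply: run_full => q _ hq2; rewrite hVp; apply/word_ge_root/mem_nth.
case: (hq) => sz heq hrun; set r := nth 0 (word u) p.
have hpW : p < size (word u) by rewrite sz.
have Wge q : p < q -> q < size (word u) -> r <= nth 0 (word u) q.
  by apply: run_full_le; rewrite sz -Vfull hrun.
have [R [cs [eu okR]]] := spine_decomposition u r p gu wu hpW erefl Wge.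
have wx : wf_pt (pi_tree (LNode r cs)) by apply: (wf_plug_sub R); rewrite -eu.
have /andP[hcs _] := wx; rewrite size_map in hcs.
case: cs eu hcs {wx} => [|s1 [|s2 ss']] // eu _; set ss := s2 :: ss'.
have eW : word u = (preW R ++ word s1) ++ flatten (map (cons r) (map word ss)).
  by rewrite eu word_plugL // -catA.
(* the split points agree: both are the first occurrence of the root letter *)
have nk : r \notin preW R ++ word s1 by apply: (spine_label_fresh R r s1 ss); rewrite /ss -eu.
have szp : size (preW R ++ word s1) = p.
  rewrite -(index_block r _ (map word ss) nk) -eW.
  have -> : p = index r' V by rewrite eV index_block // (notin_child _ _ _ gvu (or_introl erefl)).
  by apply: find_eq => // i hi; have := heq i p hi hpW; rewrite hVp.
have hq' : runs_le ((preW R ++ word s1) ++ flatten (map (cons r) (map word ss)))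
    (word v1 ++ flatten (map (cons r') (map word vs'))) by rewrite -eW -eV.
exists R, r, s1, ss; split => //.
  exact: (runs_le_catl _ _ _ _ szp hq').
exact: (runs_le_catr _ _ _ _ szp hq').
Qed.

Lemma Forall2_map_pi (A B : seq ltree) :
  List.Forall2 (fun a b => pt_le (pi_tree a) (pi_tree b)) A B ->
  List.Forall2 pt_le (map pi_tree A) (map pi_tree B).
Proof. by elim=> [|a b A' B' h _ IH] /=; constructor. Qed.

Lemma word_nil_leaf u : wf_pt (pi_tree u) -> word u = [::] -> u = LLeaf.
Proof.
case: u => [//|k [|c1 [|c2 cs]]] /=; rewrite ?size_map // => _.
by move/eqP; rewrite -size_eq0 size_cat /= addnS.
Qed.

(* By induction on v,
   splitting at its root ([runs_le_split]) and rotating along the spine of u. *)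
Lemma runs_tamari u v : labelled u -> labelled v -> wf_pt (pi_tree u) -> wf_pt (pi_tree v) ->
  runs_le (word u) (word v) -> pt_le (pi_tree u) (pi_tree v).
Proof.
elim/ltree_ind_In: v u => [|r' vs IH] u gu gv wu wv hq.
  by case: hq => /eqP; rewrite size_eq0 => /eqP /(word_nil_leaf _ wu) -> _ _; exact: rt_refl.
have /andP[hvs _] := wv; rewrite size_map in hvs.
case: vs IH gv wv hq hvs => [|v1 [|v2 vs'']] // IH gv wv hq _; set vs' := v2 :: vs''.
have [R [r [s1 [ss [eu okR hss hq1 hq2]]]]] := runs_le_split u r' v1 vs' gu wu gv isT hq.
have gx : labelled (LNode r (s1 :: ss)) by apply: (labelled_plug_sub R); rewrite -eu.
have wx : wf_pt (pi_tree (LNode r (s1 :: ss))) by apply: (wf_plug_sub R); rewrite -eu.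
have h1 : pt_le (pi_tree (plugL R s1)) (pi_tree v1).
  apply: IH; first by left.
  - rewrite eu in gu; apply: labelled_plug gu (labelled_child _ _ _ gx (or_introl erefl)) _ _.
    + move=> k /= hk; apply: lab_gt_trans hk _.
      by case/andP: gx => /= /andP[/andP[]].
    + by move=> z hz; rewrite labels_node in_cons /= mem_cat hz orbT.
  - exact: labelled_child _ _ _ gv (or_introl erefl).
  - by rewrite eu in wu; apply: wf_plug wu (wf_child _ _ _ wx (or_introl erefl)).
  - exact: wf_child _ _ _ wv (or_introl erefl).
  - by rewrite word_plugL.
have hF : List.Forall2 (fun a b => pt_le (pi_tree a) (pi_tree b)) ss vs'.
  apply: match_blocks hq2.
  - move=> a b ha hb; apply: IH; [by right | exact: labelled_child _ _ _ gx (or_intror ha)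
      | exact: labelled_child _ _ _ gv (or_intror hb) | exact: wf_child _ _ _ wx (or_intror ha)
      | exact: wf_child _ _ _ wv (or_intror hb)].
  - by move=> a ha; case/andP: gx => _ gxu; apply: notin_child gxu (or_intror ha).
  - by move=> b hb; case/andP: gv => _ gvu; apply: notin_child gvu (or_intror hb).
rewrite eu pi_plugL /=.
apply: rt_trans (tamari_spine _ _ _ (spine_ok_plug _ okR) _) _; first by rewrite size_map.
apply: pt_le_children; constructor; first by rewrite -pi_plugL.
exact: (Forall2_map_pi ss vs' hF).
Qed.

(* In a well-formed tree every label occurs in the word (internal nodes have at
   least two children), so the letters of the word are exactly the labels. *)
Lemma labels_sub_word u x : wf_pt (pi_tree u) -> x \in labels u -> x \in word u.
Proof.
elim/ltree_ind_In: u x => // k cs IH x wf; rewrite labels_node in_cons.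
case/orP=> [/eqP->|/mem_flatten_map [c [hc hx]]].
  have /andP[h _] := wf; rewrite size_map in h.
  by case: cs {IH wf} h => [|c1 [|c2 cs]] // _; rewrite word_cons mem_cat /= in_cons eqxx orbT.
have hxc : x \in word c by apply: IH => //; exact: wf_child _ _ _ wf hc.
move: hc hxc; case: cs {IH wf} => // c1 cs [<-|hc] hxc; rewrite word_cons mem_cat ?hxc //.
apply/orP; right; rewrite -map_comp; apply/mem_flatten_map; exists c; split => //=.
by rewrite in_cons hxc orbT.
Qed.

Lemma gsp_labelled u : is_gsp u -> labelled u.
Proof. by case/and3P => _ hp hi; rewrite /labelled hi (perm_uniq hp) iota_uniq. Qed.

Lemma gsp_packed u : is_gsp u -> packed (word u).
Proof.
case/and3P => wf hp _; set N := size (labels u).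
have mem x : (x \in word u) = (x \in iota 1 N).
  by rewrite -(perm_mem hp); apply/idP/idP; [exact: word_sub_labels | exact: labels_sub_word].
apply/andP; split; apply/allP => x; last by rewrite mem mem_iota => /andP[].
rewrite mem_iota => /andP[h1 h2]; rewrite mem.
have ne : word u != [::] by apply/negP => /eqP e; move: h1 h2; rewrite e /=; case: x.
move: (maxw_in _ ne); rewrite mem !mem_iota h1 => /andP[_ h3].
by rewrite (leq_ltn_trans _ h3) //; rewrite add1n ltnS in h2.
Qed.

Theorem mainTheorem9 (n : nat) (u : ltree) (t : ptree) (v : ltree) :
  is_gsp u -> gsp_degree u = n ->
  wf_pt t -> pt_degree t = n ->
  is_iota t v ->
  (pt_le (pi_tree u) t <-> gsp_le u v).
Proof.
move=> gu _ _ _ [gv [<- avoid]].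
have wu : wf_pt (pi_tree u) by case/and3P: gu.
have wv : wf_pt (pi_tree v) by case/and3P: gv.
rewrite /gsp_le (pw_le_iff _ _ (gsp_packed u gu) (gsp_packed v gv)) (inv_below_runs _ _ avoid).
split => [le_uv|runs_uv].
  exact: tamari_runs le_uv (gsp_labelled u gu) (gsp_labelled v gv) erefl erefl.
exact: runs_tamari (gsp_labelled u gu) (gsp_labelled v gv) wu wv runs_uv.
Qed.
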